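(* Let $G$ be a graph, let $h\geq 1$ and $n$ be positive integers, let $\varepsilon\in(0,\frac19]$ and $\rho\in(0,\frac12]$. Suppose $V_1,\dots,V_h\subseteq V(G)$ is a $(\rho,\varepsilon,\geq n)$-rich inflation of $K_h$, and let $Y=\bigcup_{i=1}^hV_i$. Let $X\subseteq V(G)$ be disjoint from $Y$ with $|X|\geq n$ and $d_X(y)\geq p|X|$ for all $y\in Y$, where $p\geq(1-\varepsilon)\rho$. Then at least one of the following holds: (a) $(V_1,\dots,V_h,X)$ is a $(\rho,2\varepsilon,\geq n)$-rich inflation of $K_{h+1}$; or (b) there exist $X'\subseteq X$ and $Y'\subseteq Y$ with $|X'|\geq\varepsilon\rho^{h^2}|X|$ and $|Y'|\geq \varepsilon\rho^{h^2}n$ such that $d_{X'}(y)\geq(1+\varepsilon\rho^{2h})p|X'|$ for all $y\in Y'$.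
   Context: For a vertex $y$ and a vertex set $A$, $d_A(y)=|N(y)\cap A|$. For pairwise disjoint $V_1,\dots,V_h\subseteq V(G)$, a canonical copy of $K_h$ is a tuple $(v_1,\dots,v_h)$ with $v_i\in V_i$ and all pairs $v_iv_j$ ($i\neq j$) edges of $G$. The tuple $(V_1,\dots,V_h)$ of pairwise disjoint sets is a $(\rho,\varepsilon,\geq n)$-rich inflation of $K_h$ if $e(G[V_1])\geq\rho\binom{|V_1|}2$, the number of canonical copies of $K_h$ is at least $((1-\varepsilon)\rho)^{\binom h2}\prod_{i=1}^h|V_i|$, and $|V_i|\geq n$ for all $i$. *)

From HB Require Import structures.
From mathcomp Require Import all_boot all_order all_algebra.
Set Implicit Arguments. Unset Strict Implicit. Unset Printing Implicit Defensive.
Import Order.TTheory GRing.Theory Num.Theory.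
Local Open Scope ring_scope.

Definition simple_graph (T : finType) (e : rel T) : Prop :=
  symmetric e /\ irreflexive e.

Definition deg_in (T : finType) (e : rel T) (A : {set T}) (y : T) : nat :=
  #|[set x in A | e y x]|.

Definition edges_in (T : finType) (e : rel T) (A : {set T}) : nat :=
  #|[set E : {set T} | (E \subset A) &&
      [exists x, exists y, (x != y) && e x y && (E == [set x; y])]]|.

Definition canon_copies (T : finType) (e : rel T) (k : nat)
  (V : 'I_k -> {set T}) : nat :=
  #|[set f : {ffun 'I_k -> T} | [forall i, f i \in V i] &&
      [forall i, forall j, (i != j) ==> e (f i) (f j)]]|.

(* (rho, eps, >= n)-rich inflation of K_k (pairwise disjoint sets);
   the first set V_1 is the one with index 0. *)
Definition rich_inflation (R : realFieldType) (T : finType) (e : rel T)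
  (k : nat) (V : 'I_k -> {set T}) (rho eps : R) (n : nat) : Prop :=
  [/\ (forall i j : 'I_k, i != j -> [disjoint V i & V j]),
      (forall i : 'I_k, val i = 0%N ->
         rho * ('C(#|V i|, 2))%:R <= (edges_in e (V i))%:R),
      ((1 - eps) * rho) ^+ 'C(k, 2) * \prod_(i < k) (#|V i|)%:R
         <= (canon_copies e V)%:R
    & (forall i : 'I_k, (n <= #|V i|)%N)].

Definition extend_tuple (T : finType) (h : nat) (V : 'I_h -> {set T})
  (X : {set T}) : 'I_h.+1 -> {set T} :=
  fun i => match unlift ord_max i with Some j => V j | None => X end.

(* Suppose alternative (b) fails, with beta = eps rho^(h^2) and delta = eps rho^(2h).  Build a
   canonical copy (v_1, ..., v_h) vertex by vertex, tracking the common neighbourhood N_j of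
   v_1, ..., v_(j-1) in X, and call v_j bad when X \ N_j has at least beta|X| vertices and v_j has
   at least (1 + delta) p |X \ N_j| neighbours there.  As (b) fails, whatever the earlier vertices,
   fewer than beta n <= beta |V_j| choices of v_j are bad, so all but (h - 1) beta prod_i |V_i|
   canonical copies are good.  Along a good copy the degree condition d_X(v_j) >= p|X| gives
   |N_(j+1)| >= p |N_j| - (beta + delta p)|X|, so |N_(h+1)| >= (p^h - (h - 1)(beta + delta p))|X|,
   and each vertex of N_(h+1) extends the copy to a canonical copy of K_(h+1).  Both losses are
   absorbed by lowering (1 - eps) rho to (1 - 2 eps) rho, because a^m - c^m >= m (a - c) c^(m-1). *)

From HB Require Import structures.
From mathcomp Require Import all_boot all_order all_algebra.
From mathcomp Require Import zify ring lra.
Set Implicit Arguments. Unset Strict Implicit. Unset Printing Implicit Defensive.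
Import Order.TTheory GRing.Theory Num.Theory.
Local Open Scope ring_scope.

Lemma cardsX_dep (A B : finType) (C : {set A}) (F : A -> {set B}) :
  (#|[set u : A * B | (u.1 \in C) && (u.2 \in F u.1)]| = \sum_(a in C) #|F a|)%N.
Proof.
rewrite -sum1_card (eq_bigl (fun u : A * B => (u.1 \in C) && (u.2 \in F u.1))).
  rewrite -(pair_big_dep (fun a => a \in C) (fun a b => b \in F a) (fun _ _ => 1%N)) /=.
  by apply: eq_bigr => a _; rewrite sum1_card.
by move=> u; rewrite inE.
Qed.

Lemma leq_card_bigcup (T : finType) (k : nat) (A : 'I_k -> {set T}) :
  (#|\bigcup_(j < k) A j| <= \sum_(j < k) #|A j|)%N.
Proof.
elim: k A => [|k IHk] A; first by rewrite big_ord0 cards0.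
rewrite !big_ord_recr /=; apply: leq_trans (leq_card_setU _ _) _.
by rewrite leq_add2r.
Qed.

Lemma card_setXn_coord_in (T : finType) (k : nat) (V : 'I_k -> {set T})
    (j : 'I_k) (B : {ffun 'I_k -> T} -> {set T}) :
  (forall f g : {ffun 'I_k -> T}, (forall i, i != j -> f i = g i) -> B f = B g) ->
  (#|[set f in setXn V | f j \in B f]| * #|V j| <= \sum_(g in setXn V) #|B g|)%N.
Proof.
(* (f, t) |-> (f with f j := t, f j) injects the left-hand pairs into those counted on the right. *)
move=> B_indep; rewrite -cardsX -cardsX_dep.
pose set_j (f : {ffun 'I_k -> T}) t := [ffun i => if i == j then t else f i].
have set_j_out f t i : i != j -> set_j f t i = f i by rewrite ffunE => /negbTE ->.
pose swap (u : {ffun 'I_k -> T} * T) := (set_j u.1 u.2, u.1 j).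
rewrite -(card_in_imset (f := swap)); last first.
  move=> [f t] [f' t'] _ _ [eq_f eq_t] /=.
  have -> : f = f'.
    apply/ffunP => i; case: (eqVneq i j) => [-> //|ij].
    by rewrite -(set_j_out f t) // eq_f set_j_out.
  by move/ffunP/(_ j): eq_f; rewrite !ffunE eqxx => ->.
apply/subset_leq_card/subsetP => _ /imsetP [[f t] + ->].
rewrite !inE /= => /andP [/andP [/forallP f_V f_B] t_V].
rewrite -(B_indep f) ?f_B ?andbT; last by move=> i /set_j_out ->.
by apply/forallP => i; rewrite ffunE; case: eqP => [-> //|_].
Qed.

Lemma card_setXn_coord_in_le (R : numDomainType) (T : finType) (k : nat)
    (V : 'I_k -> {set T}) (j : 'I_k) (B : {ffun 'I_k -> T} -> {set T}) (b : R) :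
  (0 < #|V j|)%N ->
  (forall f g : {ffun 'I_k -> T}, (forall i, i != j -> f i = g i) -> B f = B g) ->
  (forall g, #|B g|%:R <= b * #|V j|%:R) ->
  #|[set f in setXn V | f j \in B f]|%:R <= b * \prod_(i < k) #|V i|%:R.
Proof.
move=> Vj_gt0 B_indep B_small.
have := card_setXn_coord_in V B_indep; rewrite -(ler_nat R) natrM natr_sum => le_sum.
rewrite -(ler_pM2r (_ : 0 < #|V j|%:R)) ?ltr0n //; apply: le_trans le_sum _.
apply: le_trans (ler_sum _ (fun g _ => B_small g)) _.
by rewrite sumr_const cardsXn -[_ *+ _]mulr_natr natr_prod mulrAC.
Qed.

Section Neighbourhoods.

Variables (T : finType) (e : rel T).

Lemma deg_in_le_card (A : {set T}) y : (deg_in e A y <= #|A|)%N.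
Proof. by apply/subset_leq_card/subsetP => x; rewrite inE => /andP []. Qed.

Lemma deg_in_setD (A X : {set T}) y : A \subset X ->
  deg_in e X y = (deg_in e A y + deg_in e (X :\: A) y)%N.
Proof.
move=> sAX; rewrite /deg_in -(cardsID A [set x in X | e y x]).
by congr addn; apply: eq_card => x; rewrite !inE;
  case: (boolP (x \in A)) => [/(subsetP sAX) -> | _]; rewrite ?andbT ?andbF.
Qed.

Variables (X : {set T}) (k : nat).

Definition prefix_nbhd (f : {ffun 'I_k -> T}) (j : nat) : {set T} :=
  [set x in X | [forall i : 'I_k, (i < j)%N ==> e (f i) x]].

Lemma prefix_nbhd0 f : prefix_nbhd f 0 = X.
Proof. by apply/setP => x; rewrite inE andb_idr // => _; apply/forallP. Qed.

Lemma prefix_nbhd_sub f j : prefix_nbhd f j \subset X.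
Proof. by apply/subsetP => x; rewrite inE => /andP []. Qed.

Lemma prefix_nbhdS f (j : 'I_k) :
  prefix_nbhd f j.+1 = [set x in prefix_nbhd f j | e (f j) x].
Proof.
apply/setP => x; rewrite !inE -andbA; congr andb.
apply/forallP/andP => [N_x | [/forallP N_x fj_x] i].
  split; last by have := N_x j; rewrite ltnSn.
  by apply/forallP => i; apply/implyP => ij; apply: (implyP (N_x i)); rewrite ltnS ltnW.
apply/implyP; rewrite ltnS leq_eqVlt => /orP [/eqP/val_inj -> //|ij].
exact: (implyP (N_x i)).
Qed.

Lemma eq_prefix_nbhd (f g : {ffun 'I_k -> T}) j :
  (forall i : 'I_k, (i < j)%N -> f i = g i) -> prefix_nbhd f j = prefix_nbhd g j.
Proof.
move=> eq_fg; apply/setP => x; rewrite !inE; congr andb; apply: eq_forallb => i.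
by case: (ltnP i j) => // /eq_fg ->.
Qed.

End Neighbourhoods.

Lemma deg_in_density_le1 (R : numDomainType) (T : finType) (e : rel T)
    (A : {set T}) y (q : R) :
  (0 < #|A|)%N -> q * #|A|%:R <= (deg_in e A y)%:R -> q <= 1.
Proof.
move=> A_gt0 le_deg; rewrite -(ler_pM2r (_ : 0 < #|A|%:R)) ?ltr0n // mul1r.
by apply: le_trans le_deg _; rewrite ler_nat deg_in_le_card.
Qed.

Definition canon_tuples (T : finType) (e : rel T) (k : nat) (V : 'I_k -> {set T}) :
    {set {ffun 'I_k -> T}} :=
  [set f : {ffun 'I_k -> T} | [forall i, f i \in V i] &&
      [forall i, forall j, (i != j) ==> e (f i) (f j)]].

Section ExtendTuple.

Variables (T : finType) (h : nat) (V : 'I_h -> {set T}) (X : {set T}).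

Lemma extend_tuple_lift i : extend_tuple V X (lift ord_max i) = V i.
Proof. by rewrite /extend_tuple liftK. Qed.

Lemma extend_tuple_max : extend_tuple V X ord_max = X.
Proof. by rewrite /extend_tuple unlift_none. Qed.

Lemma prod_extend_tuple (R : pzSemiRingType) :
  \prod_(i < h.+1) (#|extend_tuple V X i|%:R : R) =
  (\prod_(i < h) #|V i|%:R) * #|X|%:R.
Proof.
rewrite big_ord_recr extend_tuple_max; congr (_ * _); apply: eq_bigr => i _.
rewrite -extend_tuple_lift; congr #|extend_tuple _ _ _|%:R; exact/val_inj/esym/lift_max.
Qed.

Lemma sum_prefix_nbhd_le_canon_copies (e : rel T) : symmetric e ->
  (\sum_(f in canon_tuples e V) #|prefix_nbhd e X f h| <=
   canon_copies e (extend_tuple V X))%N.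
Proof.
move=> e_sym; rewrite -cardsX_dep.
pose extend (u : {ffun 'I_h -> T} * T) : {ffun 'I_h.+1 -> T} :=
  [ffun i => if unlift ord_max i is Some j then u.1 j else u.2].
have extend_lift u i : extend u (lift ord_max i) = u.1 i by rewrite ffunE liftK.
have extend_max u : extend u ord_max = u.2 by rewrite ffunE unlift_none.
rewrite -(card_in_imset (f := extend)); last first.
  move=> [f x] [f' x'] _ _ /= eq_ext; congr pair; last first.
    by have := extend_max (f, x); rewrite eq_ext extend_max.
  by apply/ffunP => i; have := extend_lift (f, x) i; rewrite eq_ext extend_lift.
apply/subset_leq_card/subsetP => _ /imsetP [[f x] + ->].
rewrite !inE /= => /andP [/andP [/forallP f_V /forallP f_clique] /andP [x_X /forallP x_nbr]].
apply/andP; split; apply/forallP => i.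
  by case: (unliftP ord_max i) => [a ->|->]; rewrite ?extend_lift ?extend_max
    ?extend_tuple_lift ?extend_tuple_max.
apply/forallP => j; apply/implyP.
case: (unliftP ord_max i) => [a ->|->]; case: (unliftP ord_max j) => [b ->|->];
  rewrite ?extend_lift ?extend_max ?eqxx //= => neq.
- by apply: (implyP (forallP (f_clique a) b)); apply: contraNneq neq => ->.
- by apply: (implyP (x_nbr a)); rewrite ltn_ord.
- by rewrite e_sym; apply: (implyP (x_nbr b)); rewrite ltn_ord.
Qed.

Lemma rich_inflation_extend (R : realFieldType) (e : rel T) (rho eps eps' : R)
    (n : nat) :
  (0 < h)%N -> rich_inflation e V rho eps n ->
  [disjoint X & \bigcup_(i < h) V i] -> (n <= #|X|)%N ->
  ((1 - eps') * rho) ^+ 'C(h.+1, 2) * \prod_(i < h.+1) #|extend_tuple V X i|%:R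
    <= (canon_copies e (extend_tuple V X))%:R ->
  rich_inflation e (extend_tuple V X) rho eps' n.
Proof.
move=> h_gt0 [V_disj V_edges _ V_size] XV_disj nX copies; split => //.
- have XVi_disj i : [disjoint X & V i].
    by apply: disjointWr XV_disj; apply: (bigcup_sup i (P := predT)).
  move=> i j; case: (unliftP ord_max i) => [a ->|->]; case: (unliftP ord_max j) => [b ->|->];
    rewrite ?extend_tuple_lift ?extend_tuple_max ?eqxx // => neq.
  + by apply: V_disj; apply: contraNneq neq => ->.
  + by rewrite disjoint_sym.
- move=> i i_eq0; have i_lift : i = lift ord_max (Ordinal h_gt0).
    by apply: val_inj; rewrite /= i_eq0 /bump leqNgt h_gt0.
  by rewrite i_lift extend_tuple_lift; apply: V_edges.
- by move=> i; case: (unliftP ord_max i) => [a ->|->];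
    rewrite ?extend_tuple_lift ?extend_tuple_max.
Qed.

End ExtendTuple.

Lemma bin2_double h : ('C(h, 2).*2 = h * h.-1)%N.
Proof. by elim: h => [//|h IH]; rewrite binS bin1 doubleD IH; case: h {IH} => //= h; lia. Qed.

Section DensitySlack.

Variable R : realFieldType.

Lemma subrXX_ge (a c : R) m : 0 <= c <= a ->
  m%:R * (a - c) * c ^+ m.-1 <= a ^+ m - c ^+ m.
Proof.
move=> /andP [c_ge0 c_le_a]; rewrite subrXX mulrAC mulrC ler_wpM2l ?subr_ge0 //.
rewrite -[m in m%:R]card_ord -sumr_const mulr_suml; apply: ler_sum => i _; rewrite mul1r.
have i_le : (i <= m.-1)%N by have := ltn_ord i; lia.
rewrite -{1}(subnK i_le) exprD ler_wpM2r ?exprn_ge0 //.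
by apply: lerXn2r; rewrite ?nnegrE // (le_trans c_ge0).
Qed.

Variables (eps rho : R).

Lemma expr_density_gap m : 0 <= eps -> 0 <= rho -> rho <= 1 - 2 * eps ->
  m%:R * eps * rho ^+ (2 * m).-1 <=
  ((1 - eps) * rho) ^+ m - ((1 - 2 * eps) * rho) ^+ m.
Proof.
move=> eps_ge0 rho_ge0 rho_le; case: m => [|k]; first by rewrite mul0r mul0r subrr.
have c_bounds : 0 <= (1 - 2 * eps) * rho <= (1 - eps) * rho.
  by apply/andP; split; [apply: mulr_ge0 | apply: ler_wpM2r]; lra.
apply: le_trans (subrXX_ge k.+1 c_bounds); rewrite -!mulrA ler_wpM2l //.
have -> : (1 - eps) * rho - (1 - 2 * eps) * rho = eps * rho by ring.
rewrite -mulrA ler_wpM2l // (_ : (2 * k.+1).-1 = (2 * k).+1)%N; last by lia.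
rewrite exprS ler_wpM2l //= exprM; apply: lerXn2r; rewrite ?nnegrE ?exprn_ge0 //.
  by case/andP: c_bounds.
by rewrite expr2 ler_wpM2r.
Qed.

Lemma edge_density_slack h : 0 <= eps -> 0 <= rho -> rho <= 1 - 2 * eps ->
  ((1 - 2 * eps) * rho) ^+ 'C(h, 2) <=
  ((1 - eps) * rho) ^+ 'C(h, 2) - h.-1%:R * (eps * rho ^+ (h ^ 2)).
Proof.
move=> eps_ge0 rho_ge0 rho_le; rewrite lerBrDr addrC -lerBrDr.
apply: le_trans (expr_density_gap _ eps_ge0 rho_ge0 rho_le).
have := bin2_double h; rewrite -mul2n => bin2E.
rewrite -mulrA ler_pM ?mulr_ge0 ?ler0n ?exprn_ge0 ?ler_nat //; first by nia.
by apply: ler_wpM2l => //; apply: ler_wiXn2l => //; [lra | nia].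
Qed.

Lemma vertex_density_slack h (p : R) :
  0 <= eps -> 0 <= rho -> rho <= 1 - 2 * eps -> 2 * rho <= 1 -> (1 - eps) * rho <= p <= 1 ->
  ((1 - 2 * eps) * rho) ^+ h <=
  p ^+ h - h.-1%:R * (eps * rho ^+ (h ^ 2) + eps * rho ^+ (2 * h) * p).
Proof.
move=> eps_ge0 rho_ge0 rho_le rho_le_half /andP [p_ge p_le1].
have a_ge0 : 0 <= (1 - eps) * rho by rewrite mulr_ge0 //; lra.
have p_ge0 : 0 <= p := le_trans a_ge0 p_ge.
apply: le_trans (_ : _ <= ((1 - eps) * rho) ^+ h - _) _; last first.
  by rewrite lerB // lerXn2r.
rewrite lerBrDr addrC -lerBrDr.
apply: le_trans (expr_density_gap _ eps_ge0 rho_ge0 rho_le).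
case: h => [|[|k]]; rewrite ?mul0r ?mulr_ge0 ?exprn_ge0 //.
move: (k.+2) (ltn0Sn k.+1 : 1 < k.+2)%N => h h_gt1; set r := rho ^+ (2 * h).-1.
have r_ge0 : 0 <= r by rewrite exprn_ge0.
have rho2h : rho ^+ (2 * h) = rho * r by rewrite -exprS prednK //; lia.
have rho_sq : rho ^+ (h ^ 2) <= rho ^+ (2 * h).
  by apply: ler_wiXn2l => //; [lra | nia].
have le_sum : eps * rho ^+ (h ^ 2) + eps * rho ^+ (2 * h) * p <= eps * r.
  have : eps * rho ^+ (2 * h) * p <= eps * rho ^+ (2 * h).
    by rewrite ler_piMr ?mulr_ge0 ?exprn_ge0.
  have : eps * rho ^+ (h ^ 2) <= eps * rho ^+ (2 * h) by rewrite ler_wpM2l.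
  have : 0 <= eps * r by rewrite mulr_ge0.
  rewrite rho2h; nra.
rewrite -[leRHS]mulrA; apply: ler_pM => //; last by rewrite ler_nat leq_pred.
by rewrite addr_ge0 ?mulr_ge0 ?exprn_ge0.
Qed.

End DensitySlack.

Definition heavy_set (R : numDomainType) (T : finType) (e : rel T) (q : R)
    (Y A : {set T}) : {set T} :=
  [set y in Y | q * #|A|%:R <= (deg_in e A y)%:R].

Section GoodCopies.

Variables (R : realFieldType) (T : finType) (e : rel T) (h n : nat).
Variables (V : 'I_h -> {set T}) (X : {set T}) (p beta delta : R).

Implicit Types (f g : {ffun 'I_h -> T}) (j : 'I_h).

Let Y := \bigcup_(i < h) V i.
Let eta := beta + delta * p.

Hypotheses (h_gt0 : (0 < h)%N) (n_gt0 : (0 < n)%N) (size_V : forall i, (n <= #|V i|)%N).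
Hypotheses (p_ge0 : 0 <= p) (p_le1 : p <= 1) (beta_ge0 : 0 <= beta) (delta_ge0 : 0 <= delta).
Hypothesis deg_X : forall y, y \in Y -> p * #|X|%:R <= (deg_in e X y)%:R.
Hypothesis few_heavy : forall X' : {set T}, X' \subset X -> beta * #|X|%:R <= #|X'|%:R ->
  #|heavy_set e ((1 + delta) * p) Y X'|%:R < beta * n%:R.

(* The guard [0 < j] leaves the first vertex free, so that only h - 1 coordinates can be bad. *)
Definition bad_set (j : 'I_h) (f : {ffun 'I_h -> T}) : {set T} :=
  let D := X :\: prefix_nbhd e X f j in
  if (0 < j)%N && (beta * #|X|%:R <= #|D|%:R) then heavy_set e ((1 + delta) * p) Y D
  else set0.

Lemma card_bad_set j f : #|bad_set j f|%:R <= beta * n%:R.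
Proof.
rewrite /bad_set; case: ifP => [/andP [_ big_D] | _]; last by rewrite cards0 mulr_ge0.
exact/ltW/few_heavy/big_D/subsetDl.
Qed.

Lemma bad_set_indep j f g : (forall i, i != j -> f i = g i) -> bad_set j f = bad_set j g.
Proof.
move=> eq_fg; rewrite /bad_set (@eq_prefix_nbhd _ _ _ _ f g) // => i ij.
by apply: eq_fg; rewrite neq_ltn ij.
Qed.

Lemma card_bad_tuples j :
  #|[set f in setXn V | f j \in bad_set j f]|%:R <= beta * \prod_(i < h) #|V i|%:R.
Proof.
apply: card_setXn_coord_in_le; first exact: leq_trans (size_V j).
  exact: bad_set_indep.
by move=> g; apply: le_trans (card_bad_set j g) _; rewrite ler_wpM2l // ler_nat.
Qed.

Definition good_tuples : {set {ffun 'I_h -> T}} :=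
  [set f : {ffun 'I_h -> T} | [forall j, f j \notin bad_set j f]].

Lemma card_good_canon_tuples :
  #|canon_tuples e V|%:R - h.-1%:R * (beta * \prod_(i < h) #|V i|%:R)
    <= #|canon_tuples e V :&: good_tuples|%:R.
Proof.
set C := canon_tuples e V.
pose bad j := [set f in setXn V | f j \in bad_set j f].
have bad_cover : C :\: good_tuples \subset \bigcup_(j < h) bad j.
  apply/subsetP => f; rewrite !inE negb_forall => /andP [/existsP [j]].
  by rewrite negbK => f_bad /andP [f_V _]; apply/bigcupP; exists j; rewrite // !inE f_V.
have bad0 : bad (Ordinal h_gt0) = set0.
  by apply/setP => f; rewrite !inE /bad_set /= andbF.
have : \sum_(j < h) #|bad j|%:R <= h.-1%:R * (beta * \prod_(i < h) #|V i|%:R).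
  rewrite (bigD1 (Ordinal h_gt0)) //= bad0 cards0 add0r.
  apply: le_trans (ler_sum _ (fun j _ => card_bad_tuples j)) _.
  by rewrite sumr_const cardC1 card_ord mulr_natl.
have := leq_trans (subset_leq_card bad_cover) (leq_card_bigcup bad).
rewrite -(ler_nat R) natr_sum -(cardsID good_tuples C) natrD.
lra.
Qed.

Lemma prefix_nbhd_step j f : (0 < j)%N -> f j \in Y -> f j \notin bad_set j f ->
  p * #|prefix_nbhd e X f j|%:R - eta * #|X|%:R <= (deg_in e (prefix_nbhd e X f j) (f j))%:R.
Proof.
move=> j_gt0 Y_fj good_fj; set N := prefix_nbhd e X f j; set D := X :\: N.
have sNX : N \subset X := prefix_nbhd_sub e X f j.
have card_X : #|X|%:R = #|N|%:R + #|D|%:R :> R.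
  by rewrite -natrD -(cardsID N X) (setIidPr sNX).
have deg_ge := deg_X Y_fj; rewrite (deg_in_setD e _ sNX) natrD card_X -/D in deg_ge.
have deg_D_le := deg_in_le_card e D (f j); rewrite -(ler_nat R) in deg_D_le.
have [bN bD dN dD pD] : [/\ 0 <= beta * #|N|%:R, 0 <= beta * #|D|%:R, 0 <= delta * p * #|N|%:R,
    0 <= delta * p * #|D|%:R & 0 <= p * #|D|%:R] by split; rewrite !mulr_ge0.
rewrite card_X /eta; move: good_fj; rewrite /bad_set j_gt0 -/N -/D /=.
case: ifP => [_ | /negbT + _]; first by rewrite inE Y_fj -ltNge; lra.
by rewrite -ltNge card_X; lra.
Qed.

Lemma card_prefix_nbhd_ge f : f \in setXn V -> f \in good_tuples ->
  forall k, (0 < k <= h)%N -> (p ^+ k - k.-1%:R * eta) * #|X|%:R <= #|prefix_nbhd e X f k|%:R.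
Proof.
move=> /setXnP f_V; rewrite inE => /forallP f_good.
have eta_ge0 : 0 <= eta by rewrite addr_ge0 ?mulr_ge0.
have Y_f j : f j \in Y by apply/bigcupP; exists j.
elim=> [// | [_ k_le | k IHk k_le]].
  rewrite (prefix_nbhdS e X f (Ordinal k_le)) prefix_nbhd0 mul0r subr0 expr1.
  exact: deg_X.
have k_lt : (k.+1 < h)%N by [].
rewrite (prefix_nbhdS e X f (Ordinal k_lt)) /=.
have IH := IHk (ltnW k_lt); rewrite /= in IH.
apply: le_trans _ (prefix_nbhd_step (j := Ordinal k_lt) isT (Y_f _) (f_good _)).
have := ler_wpM2l p_ge0 IH.
have : p * (k%:R * eta * #|X|%:R) <= k%:R * eta * #|X|%:R by rewrite ler_piMl ?mulr_ge0.
rewrite /= [p ^+ k.+2]exprS -natr1; lra.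
Qed.

Lemma canon_copies_extend_ge_good : symmetric e ->
  #|canon_tuples e V :&: good_tuples|%:R * ((p ^+ h - h.-1%:R * eta) * #|X|%:R)
    <= (canon_copies e (extend_tuple V X))%:R.
Proof.
move=> e_sym; have := sum_prefix_nbhd_le_canon_copies V X e_sym.
rewrite -(ler_nat R) natr_sum; apply: le_trans.
rewrite [leRHS](big_setID good_tuples) /= -[leLHS]addr0 lerD ?sumr_ge0 //.
rewrite mulr_natl -sumr_const; apply: ler_sum => f /setIP [f_C f_good].
apply: card_prefix_nbhd_ge f_good _ _; last by rewrite h_gt0 leqnn.
by move: f_C; rewrite !inE => /andP [].
Qed.

Lemma canon_copies_extend_ge (a0 c0 c1 : R) : symmetric e -> 0 <= c0 -> 0 <= c1 ->
  a0 * \prod_(i < h) #|V i|%:R <= (canon_copies e V)%:R ->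
  c0 <= a0 - h.-1%:R * beta -> c1 <= p ^+ h - h.-1%:R * eta ->
  c0 * c1 * (\prod_(i < h) #|V i|%:R * #|X|%:R) <= (canon_copies e (extend_tuple V X))%:R.
Proof.
move=> e_sym c0_ge0 c1_ge0 V_copies c0_le c1_le.
have Pi_ge0 : 0 <= \prod_(i < h) #|V i|%:R :> R by rewrite prodr_ge0.
apply: le_trans (canon_copies_extend_ge_good e_sym); rewrite mulrACA.
apply: ler_pM; rewrite ?mulr_ge0 ?ler_wpM2r //.
apply: le_trans card_good_canon_tuples.
apply: le_trans (ler_wpM2r Pi_ge0 c0_le) _.
by rewrite mulrBl -mulrA lerB.
Qed.

End GoodCopies.

Theorem lemma4p5 (R : realFieldType) (T : finType) (e : rel T)
  (h n : nat) (eps rho p : R) (V : 'I_h -> {set T}) (X : {set T}) :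
  simple_graph e ->
  (0 < h)%N -> (0 < n)%N ->
  0 < eps -> eps <= 9^-1 ->
  0 < rho -> rho <= 2^-1 ->
  rich_inflation e V rho eps n ->
  [disjoint X & \bigcup_(i < h) V i] ->
  (n <= #|X|)%N ->
  (1 - eps) * rho <= p ->
  (forall y, y \in \bigcup_(i < h) V i -> p * (#|X|)%:R <= (deg_in e X y)%:R) ->
  rich_inflation e (extend_tuple V X) rho (2 * eps) n \/
  exists (X' Y' : {set T}),
    [/\ X' \subset X, Y' \subset \bigcup_(i < h) V i,
        eps * rho ^+ (h ^ 2) * (#|X|)%:R <= (#|X'|)%:R,
        eps * rho ^+ (h ^ 2) * n%:R <= (#|Y'|)%:R
      & forall y, y \in Y' ->
          (1 + eps * rho ^+ (2 * h)) * p * (#|X'|)%:R <= (deg_in e X' y)%:R].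
Proof.
move=> [e_sym _] h_gt0 n_gt0 eps_gt0 eps_le rho_gt0 rho_le V_rich XV_disj n_le_X p_ge deg_X.
set Y := \bigcup_(i < h) V i in XV_disj deg_X *.
set beta := eps * rho ^+ (h ^ 2); set delta := eps * rho ^+ (2 * h).
set heavy := heavy_set e ((1 + delta) * p) Y.
have [/existsP [X' /and3P [sX'X X'_big heavy_big]] | /existsPn light] :=
  boolP [exists X' : {set T}, [&& X' \subset X, beta * #|X|%:R <= #|X'|%:R &
                                  beta * n%:R <= #|heavy X'|%:R]].
  right; exists X', (heavy X'); split => //; last by move=> y; rewrite inE => /andP [].
  by apply/subsetP => y; rewrite inE => /andP [].
have few_heavy (X' : {set T}) : X' \subset X -> beta * #|X|%:R <= #|X'|%:R ->
    #|heavy X'|%:R < beta * n%:R.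
  by move=> sX'X X'_big; rewrite ltNge; apply: contraNN (light X') => ->; rewrite sX'X X'_big.
have [_ _ V_copies V_size] := V_rich.
have [y Vy] : exists y, y \in V (Ordinal h_gt0).
  by apply/set0Pn; rewrite -card_gt0 (leq_trans n_gt0).
have Yy : y \in Y by apply/bigcupP; exists (Ordinal h_gt0).
have p_le1 := deg_in_density_le1 (leq_trans n_gt0 n_le_X) (deg_X y Yy).
have [eps_ge0 rho_ge0 rho_small rho_half] :
  [/\ 0 <= eps, 0 <= rho, rho <= 1 - 2 * eps & 2 * rho <= 1] by split; lra.
have p_ge0 : 0 <= p by apply: le_trans p_ge; rewrite mulr_ge0 //; lra.
have c_ge0 : 0 <= (1 - 2 * eps) * rho by rewrite mulr_ge0 //; lra.
left; apply: (rich_inflation_extend (eps := eps)) => //.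
rewrite (prod_extend_tuple V X R) binS bin1 exprD.
apply: (canon_copies_extend_ge (n := n) (p := p) (beta := beta) (delta := delta));
  rewrite ?mulr_ge0 ?exprn_ge0 //; first exact: V_copies.
- exact: edge_density_slack.
- by apply: vertex_density_slack; rewrite ?p_ge ?p_le1.
Qed.
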